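(* Let \(\mathcal{H}=(A,(H_i)_{i=1}^k)\) and \(\mathcal{K}=(B,(K_i)_{i=1}^k)\) be \(k\)-relational F-hypergraphs and \(f\colon\mathcal{H}\to\mathcal{K}\) a map of \(k\)-relational F-hypergraphs. The following are equivalent: (i) \(f\) is a positional reduction; (ii) the equivalence relation \(E=\{(a,a')\in A\times A\mid f(a)=f(a')\}\) is a regular equivalence on \((A,H_i)\) for each \(i\in\{1,\dots,k\}\), and \((B,K_i)=(A/E,H_i/E)\) for each \(i\) (with \(f\) the quotient map).
   Context: An F-hypergraph is \((A,H)\) with \(H\subseteq A\times\mathcal{P}(A)\) (hyperedges \((a,U)\)). A \(k\)-relational F-hypergraph is \((A,(H_i)_{i=1}^k)\) with each \((A,H_i)\) an F-hypergraph. A map \((A,(H_i))\to(B,(K_i))\) is a function \(f\colon A\to B\) with \((f(a),f(V))\in K_i\) whenever \((a,V)\in H_i\). It reflects hyperedges if for all \(a\in A\), all \(i\) and all \((f(a),U)\in K_i\) there is \(V\subseteq A\) with \((a,V)\in H_i\) and \(f(V)=U\). A positional reduction is a map that is surjective on vertices and reflects hyperedges. A regular equivalence on an F-hypergraph \((A,H)\) is an equivalence relation \(E\) on \(A\) such that for every \((a,a')\in E\) and every \((a,U)\in H\) there is \((a',U')\in H\) with: for each \(u\in U\) some \(u'\in U'\) has \((u,u')\in E\), and for each \(u'\in U'\) some \(u\in U\) has \((u,u')\in E\). For an equivalence relation \(E\) on \(A\), the blockmodel \(H/E\) is the F-hypergraph structure on the set of classes \(A/E\) in which \(([a],X)\)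 is a hyperedge iff there exists \((a,U)\in H\) with \(X=\{[u]\mid u\in U\}\). *)

From mathcomp Require Import all_boot.
From mathcomp Require Export classical_sets.
Set Implicit Arguments. Unset Strict Implicit. Unset Printing Implicit Defensive.
Local Open Scope classical_set_scope.

(* An F-hypergraph structure on A: H a U means (a,U) is a hyperedge. *)
Definition fhyp (A : Type) := A -> set A -> Prop.

Definition kfhyp (k : nat) (A : Type) := 'I_k -> fhyp A.

Definition is_map (k : nat) (A B : Type) (H : kfhyp k A) (K : kfhyp k B)
  (f : A -> B) : Prop :=
  forall i a V, H i a V -> K i (f a) (f @` V).

Definition reflects (k : nat) (A B : Type) (H : kfhyp k A) (K : kfhyp k B)
  (f : A -> B) : Prop :=
  forall a i U, K i (f a) U -> exists V, H i a V /\ f @` V = U.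

Definition positional_reduction (k : nat) (A B : Type) (H : kfhyp k A)
  (K : kfhyp k B) (f : A -> B) : Prop :=
  is_map H K f /\ (forall b, exists a, f a = b) /\ reflects H K f.

Definition equivalence_rel (A : Type) (E : A -> A -> Prop) : Prop :=
  (forall a, E a a) /\ (forall a b, E a b -> E b a) /\
  (forall a b c, E a b -> E b c -> E a c).

Definition regular_equivalence (A : Type) (H : fhyp A) (E : A -> A -> Prop)
  : Prop :=
  equivalence_rel E /\
  forall a a' U, E a a' -> H a U ->
    exists U', H a' U' /\
      (forall u, U u -> exists u', U' u' /\ E u u') /\
      (forall u', U' u' -> exists u, U u /\ E u u').

Definition eclass (A : Type) (E : A -> A -> Prop) (a : A) : set A :=
  [set x | E a x].

(* blockmodel H/E, with vertices the classes (as subsets of A):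
   ([a], X) is a hyperedge iff there is (a,U) in H with X = {[u] | u in U}. *)
Definition blockmodel (A : Type) (H : fhyp A) (E : A -> A -> Prop)
  : set A -> set (set A) -> Prop :=
  fun C X => exists a U, C = eclass E a /\ H a U /\ X = (eclass E) @` U.

Definition kernel_rel (A B : Type) (f : A -> B) : A -> A -> Prop :=
  fun a a' => f a = f a'.

(* fibre of f over b; for surjective f this is the bijection B ~ A/E
   under which f becomes the quotient map a |-> [a]. *)
Definition fibre (A B : Type) (f : A -> B) (b : B) : set A :=
  f @^-1` [set b].

(* For the kernel E of f, the zig-zag clause of a regular equivalence says
   exactly that two hyperedges have the same image under f, and for surjective
   f the blockmodel H_i/E, read through the fibres of f, is the image of H_i
   under f.  So (ii) says that K_i is the image of H_i and that a hyperedge at a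
   can be traded for one with the same image at any a' with f a = f a'; together
   these say that every hyperedge of K_i at f a' is the image of a hyperedge at
   a' itself, which is reflection. *)
From Pilot Require Import Defs.
From mathcomp Require Import all_boot boolp classical_sets.
Local Open Scope classical_set_scope.

Lemma image_injective {T U : Type} {g : T -> U} :
  injective g -> injective (fun A : set T => g @` A).
Proof.
move=> g_inj A B gAB; apply/seteqP; split=> x Ax.
- by rewrite -(image_inj g_inj) -gAB; exists x.
- by rewrite -(image_inj g_inj) gAB; exists x.
Qed.

Definition image_fhyp {A B : Type} (f : A -> B) (H : fhyp A) : fhyp B :=
  fun b X => exists2 a, f a = b & exists2 U, H a U & f @` U = X.

Section KernelRelation.
Context {A B : Type} (f : A -> B).

Lemma kernel_rel_equiv : Defs.equivalence_rel (kernel_rel f).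
Proof. by rewrite /kernel_rel; split=> [//|]; split=> [a b ->|a b c -> ->]. Qed.

Lemma eclass_kernel_rel : eclass (kernel_rel f) = fibre f \o f.
Proof. by apply: funext=> a; apply/seteqP; split=> x /=; rewrite /kernel_rel. Qed.

Lemma fibre_inj : (forall b, exists a, f a = b) -> injective (fibre f).
Proof.
move=> f_surj b b'; have [a <-] := f_surj b => eq_fibre.
by have : fibre f b' a by rewrite -eq_fibre /fibre.
Qed.

Lemma image_eq_kernel_zigzag (U U' : set A) :
  f @` U = f @` U' <->
  (forall u, U u -> exists u', U' u' /\ kernel_rel f u u') /\
  (forall u', U' u' -> exists u, U u /\ kernel_rel f u u').
Proof.
split=> [fUU'|[zig zag]].
- split=> [u Uu|u' U'u'].
  + have [u' U'u' fu'] : (f @` U') (f u) by rewrite -fUU'; exists u.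
    by exists u'.
  + have [u Uu fu] : (f @` U) (f u') by rewrite fUU'; exists u'.
    by exists u.
- apply/seteqP; split=> _ [u Uu <-].
  + by have [u' [U'u' ->]] := zig u Uu; exists u'.
  + by have [u'' [Uu'' fu'']] := zag u Uu; exists u''.
Qed.

Lemma regular_kernelP (H : fhyp A) :
  regular_equivalence H (kernel_rel f) <->
  (forall a a' U, f a = f a' -> H a U -> exists2 U', H a' U' & f @` U = f @` U').
Proof.
split=> [[_ reg] a a' U faa' HU | reg].
- have [U' [HU' zigzag]] := reg a a' U faa' HU.
  by exists U'; last exact/image_eq_kernel_zigzag.
- split; first exact: kernel_rel_equiv.
  move=> a a' U faa' HU; have [U' HU' fUU'] := reg a a' U faa' HU.
  by exists U'; split; last exact/image_eq_kernel_zigzag.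
Qed.

Lemma blockmodel_kernel_relE (H : fhyp A) b (X : set B) :
  (forall b, exists a, f a = b) ->
  blockmodel H (kernel_rel f) (fibre f b) (fibre f @` X) <-> image_fhyp f H b X.
Proof.
move=> f_surj; have fibre_f_inj := fibre_inj f_surj.
rewrite /blockmodel eclass_kernel_rel; split.
- move=> [a [U [fibre_ba [HU fX]]]]; exists a; first exact/esym/fibre_f_inj.
  by exists U => //; apply: (image_injective fibre_f_inj); rewrite image_comp fX.
- move=> [a <- [U HU <-]]; exists a, U.
  by rewrite image_comp.
Qed.

End KernelRelation.

Section PositionalReduction.
Context {k : nat} {A B : Type} {H : kfhyp k A} {K : kfhyp k B} {f : A -> B}.
Hypothesis f_map : is_map H K f.

Lemma reflects_image_fhyp : (forall b, exists a, f a = b) -> reflects H K f ->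
  forall i b X, K i b X <-> image_fhyp f (H i) b X.
Proof.
move=> f_surj f_refl i b X; split=> [KX | [a <- [U HU <-]]]; last exact: f_map.
have [a fab] := f_surj b; subst b.
by have [V [HV fV]] := f_refl a i X KX; exists a => //; exists V.
Qed.

Lemma reflects_regular_kernel i :
  reflects H K f -> regular_equivalence (H i) (kernel_rel f).
Proof.
move=> f_refl; apply/regular_kernelP=> a a' U faa' HU.
have KU : K i (f a') (f @` U) by rewrite -faa'; exact: f_map.
by have [U' [HU' fU']] := f_refl a' i _ KU; exists U'.
Qed.

Lemma regular_kernel_reflects :
  (forall i, regular_equivalence (H i) (kernel_rel f)) ->
  (forall i b X, K i b X -> image_fhyp f (H i) b X) -> reflects H K f.
Proof.
move=> reg K_image a i X KX.
have [a0 fa0 [U0 HU0 fU0]] := K_image i _ _ KX.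
have [U HU fU0U] := (regular_kernelP f (H i)).1 (reg i) a0 a U0 fa0 HU0.
by exists U; split; last rewrite -fU0U.
Qed.

End PositionalReduction.

Theorem lemma6p5 (k : nat) (A B : Type) (H : kfhyp k A) (K : kfhyp k B)
  (f : A -> B) (fmap : is_map H K f) :
  positional_reduction H K f <->
  ((forall i : 'I_k, regular_equivalence (H i) (kernel_rel f)) /\
   (forall b, exists a, f a = b) /\
   (forall (i : 'I_k) (b : B) (X : set B),
      K i b X <-> blockmodel (H i) (kernel_rel f) (fibre f b) ((fibre f) @` X))).
Proof.
split=> [[_ [f_surj f_refl]] | [reg [f_surj K_blockmodel]]].
- split; first by move=> i; exact: reflects_regular_kernel fmap i f_refl.
  split=> // i b X; rewrite blockmodel_kernel_relE //.
  exact: reflects_image_fhyp fmap f_surj f_refl i b X.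
- split=> //; split=> //; apply: regular_kernel_reflects => // i b X.
  by rewrite K_blockmodel blockmodel_kernel_relE.
Qed.
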